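(* Let $T=(V,E)$ be a finite rooted tree, $\Pr$ a probability distribution over a finite set of queries, $u\in V$ and $v\in A(u)$. Let $R,R'\subseteq V$ satisfy (i) $v\in R$ and $v\in R'$; (ii) $T(u)\cap R=T(u)\cap R'$; (iii) $\mathrm{path}(u,v)\cap R=\mathrm{path}(u,v)\cap R'=\emptyset$. Then $B_u(R)=B_u(R')$.
   Context: $T=(V,E)$ is a finite rooted tree. For $u\in V$, $T(u)$ is the set of nodes of the subtree rooted at $u$ (including $u$), $A(u)$ the set of proper ancestors of $u$, and for $v\in A(u)$, $\mathrm{path}(u,v)$ the set of nodes strictly between $u$ and $v$ on the path from $u$ to $v$. Each non-leaf node is associated with a variable from a finite set $X$; $\mathrm{vars}(u)$ is the set of variables associated with the nodes of $T(u)$. Each query $q$ determines $Z_q\subseteq X$. For $R\subseteq V$, $w\in V$, query $q$: $I_q(w,R)=1$ iff $w\in R$, $\mathrm{vars}(w)\subseteq Z_q$, and no $x\in A(w)$ has $x\in R$ and $\mathrm{vars}(x)\subseteq Z_q$; else $I_q(w,R)=0$. $\mathbb{E}[I(w,R)]=\sum_q\Pr(q)I_q(w,R)$. Each node $x$ has a partial cost $c(x)$, and the total cost is $C(w)=\sum_{x\in T(w)}c(x)$. The partial benefit of $R$ at $u$ is $B_u(R)=\sum_{w\in R\cap T(u)}\mathbb{E}[I(w,R)]\,C(w)$. *)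

From mathcomp Require Import all_boot all_order all_algebra.
Set Implicit Arguments. Unset Strict Implicit. Unset Printing Implicit Defensive.
Import Order.TTheory GRing.Theory Num.Theory.
Local Open Scope ring_scope.

(* A finite rooted tree on the finType V is given by a parent map:
   parent u = Some p  iff p is the parent of u;  parent r = None for the root. *)
Section Tree.
Variable V : finType.
Variable parent : V -> option V.

Definition childrel : rel V := fun c p => parent c == Some p.

Definition subtree (u : V) : {set V} := [set w | connect childrel w u].

Definition ancestors (u : V) : {set V} := [set x | (x != u) && connect childrel u x].

Definition path_between (u v : V) : {set V} :=
  [set w | (w \in ancestors u) && (v \in ancestors w)].

Definition is_rooted_tree : Prop :=
  (forall u p, parent u = Some p -> ~~ connect childrel p u) /\
  (exists r, parent r = None /\ forall u, connect childrel u r).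

Definition nonleaf (u : V) : bool := [exists w, childrel w u].

Section Queries.
Variables (X Q : finType) (lab : V -> X) (Z : Q -> {set X}).
Variable (R : realFieldType) (Pr : Q -> R) (c : V -> R).

Definition vars (u : V) : {set X} := lab @: [set w in subtree u | nonleaf w].

Definition covered (q : Q) (w : V) : bool := vars w \subset Z q.

Definition Iq (q : Q) (w : V) (Rs : {set V}) : bool :=
  [&& w \in Rs, covered q w &
      ~~ [exists x in ancestors w, (x \in Rs) && covered q x]].

Definition EI (w : V) (Rs : {set V}) : R := \sum_(q : Q) Pr q * (Iq q w Rs)%:R.

Definition Ctot (w : V) : R := \sum_(x in subtree w) c x.

Definition Bpart (u : V) (Rs : {set V}) : R :=
  \sum_(w in Rs :&: subtree u) EI w Rs * Ctot w.

End Queries.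
End Tree.

(* A node w of T(u) has the same indicator under R and R'.  Its own membership
   and the covered R-ancestors inside T(u) are unchanged by (ii).  A covered
   R-ancestor x outside T(u) is a proper ancestor of u; by (iii) it is v or lies
   above v, and since vars is monotone along the ancestor relation, v is then a
   covered R'-ancestor of w.  Hence "blocked by a covered ancestor" agrees for R
   and R', and so do the summands of B_u. *)
From mathcomp Require Import all_boot all_order all_algebra.
Set Implicit Arguments. Unset Strict Implicit. Unset Printing Implicit Defensive.
Import Order.TTheory GRing.Theory Num.Theory.
Local Open Scope ring_scope.

Section TreeOrder.
Variables (V : finType) (parent : V -> option V).
Local Notation e := (childrel parent).
Local Notation subtree := (subtree parent).
Local Notation ancestors := (ancestors parent).
Local Notation path_between := (path_between parent).

Lemma connect_child_total a b c :
  connect e a b -> connect e a c -> connect e b c || connect e c b.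
Proof.
move=> /connectP [p ep ->]; elim: p a ep c => [|y p IHp] a /= ep c ac.
  by rewrite ac.
case/andP: ep => ay ep.
case/connectP: ac => [[|z q] /= zq ->].
  by apply/orP; right; apply/connectP; exists (y :: p) => //=; rewrite ay.
case/andP: zq => az zq.
have yz : y = z by move: ay az; rewrite /childrel => /eqP -> /eqP [].
by subst z; apply: IHp => //; apply/connectP; exists q.
Qed.

Lemma ancestor_split u v w x :
  v \in ancestors u -> w \in subtree u -> x \in ancestors w ->
  [\/ x \in subtree u, x \in path_between u v | connect e v x].
Proof.
rewrite !inE => /andP [vu uv] wu /andP [xw wx].
case/orP: (connect_child_total wu wx) => [ux | xu]; last by constructor 1.
have [-> | xu] := eqVneq x u; first by constructor 1; apply: connect0.
case/orP: (connect_child_total uv ux) => [vx | xv]; first by constructor 3.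
have [<- | xv'] := eqVneq x v; first by constructor 3; apply: connect0.
by constructor 2; rewrite ux xv.
Qed.

Hypothesis parent_acyclic : forall a p, parent a = Some p -> ~~ connect e p a.

Lemma connect_child_antisym a b : connect e a b -> connect e b a -> a = b.
Proof.
move=> /connectP [[|y p] /= ep ->] // ba.
case/andP: ep => /eqP/parent_acyclic ay ep.
by move: ay; rewrite (connect_trans _ ba) //; apply/connectP; exists p.
Qed.

Lemma ancestors_subtree u v w :
  v \in ancestors u -> w \in subtree u -> v \in ancestors w.
Proof.
rewrite !inE => /andP [vu uv] wu; rewrite (connect_trans wu uv) andbT.
by apply: contraNneq vu => vw; rewrite vw (connect_child_antisym wu) // -vw.
Qed.

Section Blocking.
Variables (X Q : finType) (lab : V -> X) (Z : Q -> {set X}).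
Local Notation covered := (covered parent lab Z).

Lemma vars_connect a b :
  connect e a b -> vars parent lab a \subset vars parent lab b.
Proof.
move=> ab; apply: imsetS; apply/subsetP => y; rewrite !inE => /andP [ya ->].
by rewrite (connect_trans ya ab).
Qed.

Lemma covered_connect q a b : connect e a b -> covered q b -> covered q a.
Proof. by move=> /vars_connect ab; apply: subset_trans. Qed.

Definition blocked (q : Q) (w : V) (Rs : {set V}) : bool :=
  [exists x in ancestors w, (x \in Rs) && covered q x].

Lemma Iq_blocked q w Rs :
  Iq parent lab Z q w Rs = [&& w \in Rs, covered q w & ~~ blocked q w Rs].
Proof. by []. Qed.

Lemma blocked_transfer q u v w (Rs Rs' : {set V}) :
  v \in ancestors u -> v \in Rs' -> subtree u :&: Rs \subset Rs' ->
  path_between u v :&: Rs = set0 -> w \in subtree u ->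
  blocked q w Rs -> blocked q w Rs'.
Proof.
move=> vu vR' sub between wu /exists_inP [x xw /andP [xR cx]].
case: (ancestor_split vu wu xw) => [xu | xuv | vx].
- apply/exists_inP; exists x; rewrite // cx andbT.
  by apply: (subsetP sub); rewrite inE xu xR.
- by have := in_set0 x; rewrite -between inE xuv xR.
- apply/exists_inP; exists v; first exact: ancestors_subtree vu wu.
  by rewrite vR' (covered_connect vx cx).
Qed.

Lemma Iq_subtree q u v w (Rs Rs' : {set V}) :
  v \in ancestors u -> v \in Rs -> v \in Rs' ->
  subtree u :&: Rs = subtree u :&: Rs' ->
  path_between u v :&: Rs = set0 -> path_between u v :&: Rs' = set0 ->
  w \in subtree u -> Iq parent lab Z q w Rs = Iq parent lab Z q w Rs'.
Proof.
move=> vu vR vR' E between between' wu.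
have wR : (w \in Rs) = (w \in Rs').
  by have := congr1 (fun S : {set V} => w \in S) E; rewrite /= !in_setI wu.
rewrite !Iq_blocked wR; congr [&& _, _ & ~~ _].
have sub : subtree u :&: Rs \subset Rs' by rewrite E subsetIr.
have sub' : subtree u :&: Rs' \subset Rs by rewrite -E subsetIr.
apply/idP/idP; [exact: blocked_transfer vu vR' sub between wu |
                 exact: blocked_transfer vu vR sub' between' wu].
Qed.

End Blocking.
End TreeOrder.

Theorem lemma2 (V X Q : finType) (parent : V -> option V)
  (htree : is_rooted_tree parent) (lab : V -> X) (Z : Q -> {set X})
  (R : realFieldType) (Pr : Q -> R)
  (hPr0 : forall q, 0 <= Pr q) (hPr1 : \sum_(q : Q) Pr q = 1)
  (c : V -> R) (u v : V) (Rs Rs' : {set V}) :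
  v \in ancestors parent u ->
  v \in Rs -> v \in Rs' ->
  subtree parent u :&: Rs = subtree parent u :&: Rs' ->
  path_between parent u v :&: Rs = set0 ->
  path_between parent u v :&: Rs' = set0 ->
  Bpart parent lab Z Pr c u Rs = Bpart parent lab Z Pr c u Rs'.
Proof.
move=> vu vR vR' E between between'.
have [acyclic _] := htree.
rewrite /Bpart setIC E setIC; apply: eq_bigr => w; rewrite inE => /andP [_ wu].
congr (_ * _); apply: eq_bigr => q _.
by rewrite (Iq_subtree acyclic lab Z q vu vR vR' E between between' wu).
Qed.
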